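(* Let $A$ be a finite-dimensional Leibniz algebra over a field which is not nilpotent but all of whose proper subalgebras are nilpotent. Then $\dim(A/A^2)\le 1$.
   Context: A (left) Leibniz algebra is an algebra satisfying $x(yz)=(xy)z+y(xz)$ for all $x,y,z$. $A^2=AA$; nilpotent means $A^t=0$ for some $t$, where $A^1=A$, $A^{j+1}=AA^j$. *)

From HB Require Import structures.
From mathcomp Require Import all_boot all_order all_algebra.
Set Implicit Arguments. Unset Strict Implicit. Unset Printing Implicit Defensive.
Import GRing.Theory.
Local Open Scope ring_scope.
Local Open Scope vspace_scope.

(* An algebra structure on a finite-dimensional F-vector space V is given by a
   (bilinear) product mul : V -> V -> V; bilinearity is a hypothesis of the
   theorem.  For subspaces U W, U W := span {x y | x in U, y in W}; by
   bilinearity this is the span of products of basis vectors. *)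
Definition prodsp (F : fieldType) (V : vectType F) (mul : V -> V -> V)
  (U W : {vspace V}) : {vspace V} :=
  <<allpairs mul (vbasis U) (vbasis W)>>.

(* lpow mul U n = U^(n+1), where U^1 = U and U^(j+1) = U U^j. *)
Fixpoint lpow (F : fieldType) (V : vectType F) (mul : V -> V -> V)
  (U : {vspace V}) (n : nat) : {vspace V} :=
  match n with
  | O => U
  | S k => prodsp mul U (lpow mul U k)
  end.

Definition nilpotent_sp (F : fieldType) (V : vectType F) (mul : V -> V -> V)
  (U : {vspace V}) : Prop :=
  exists n : nat, lpow mul U n = 0.

Definition is_subalg (F : fieldType) (V : vectType F) (mul : V -> V -> V)
  (U : {vspace V}) : Prop :=
  forall x y, x \in U -> y \in U -> mul x y \in U.

Definition bilinear_mul (F : fieldType) (V : vectType F) (mul : V -> V -> V) : Prop :=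
  (forall (a : F) (x y z : V), (mul (a *: x + y) z = a *: mul x z + mul y z)%R) /\
  (forall (a : F) (x y z : V), (mul x (a *: y + z) = a *: mul x y + mul x z)%R).

Definition left_leibniz (F : fieldType) (V : vectType F) (mul : V -> V -> V) : Prop :=
  forall x y z : V, (mul x (mul y z) = mul (mul x y) z + mul y (mul x z))%R.

From HB Require Import structures.
From mathcomp Require Import all_boot all_order all_algebra.
From mathcomp Require Import zify.
Local Open Scope ring_scope.
Local Open Scope vspace_scope.
Import GRing.Theory.
Set Implicit Arguments. Unset Strict Implicit. Unset Printing Implicit Defensive.

(* Suppose dim (A/A^2) >= 2.  Then linear algebra yields two proper subspaces
   M1, M2 of A with A^2 <= M1, A^2 <= M2 and M1 + M2 = A.  A subspace
   containing A^2 is a two-sided ideal, hence a proper subalgebra, so M1 and M2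
   are nilpotent by minimality.  The heart of the argument is that, by the left
   Leibniz identity, left multiplication by any x stabilises every power M^s of
   a left ideal M; expanding x = u1 + u2 with ui in Mi then shows
     A^(k+1) <= sum_(s <= k) M1^(s+1) :&: M2^(k-s+1),
   and for k large each summand vanishes, so A is nilpotent: a contradiction. *)

Section Bilinear.
Variables (F : fieldType) (V : vectType F) (mul : V -> V -> V).
Hypothesis mul_bilinear : bilinear_mul mul.

Lemma mul0l z : mul 0%R z = 0%R.
Proof.
have h := (proj1 mul_bilinear) 1 0%R 0%R z; rewrite !scale1r addr0 in h.
by apply: (@addrI _ (mul 0%R z)); rewrite addr0 -h.
Qed.

Lemma mul0r z : mul z 0%R = 0%R.
Proof.
have h := (proj2 mul_bilinear) 1 z 0%R 0%R; rewrite !scale1r addr0 in h.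
by apply: (@addrI _ (mul z 0%R)); rewrite addr0 -h.
Qed.

Lemma mulDl x y z : (mul (x + y) z = mul x z + mul y z)%R.
Proof. by have h := (proj1 mul_bilinear) 1 x y z; rewrite !scale1r in h. Qed.

Lemma mulDr x y z : (mul z (x + y) = mul z x + mul z y)%R.
Proof. by have h := (proj2 mul_bilinear) 1 z x y; rewrite !scale1r in h. Qed.

Lemma mulZl a x z : mul (a *: x) z = a *: mul x z.
Proof. by have h := (proj1 mul_bilinear) a x 0%R z; rewrite addr0 mul0l addr0 in h. Qed.

Lemma mulZr a x z : mul z (a *: x) = a *: mul z x.
Proof. by have h := (proj2 mul_bilinear) a z x 0%R; rewrite addr0 mul0r addr0 in h. Qed.

Lemma mul_suml I (r : seq I) (P : pred I) (f : I -> V) z :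
  (mul (\sum_(i <- r | P i) f i) z = \sum_(i <- r | P i) mul (f i) z)%R.
Proof. exact: (big_morph (mul^~ z) (fun x y => mulDl x y z) (mul0l z)). Qed.

Lemma mul_sumr I (r : seq I) (P : pred I) (f : I -> V) z :
  (mul z (\sum_(i <- r | P i) f i) = \sum_(i <- r | P i) mul z (f i))%R.
Proof. exact: (big_morph (mul z) (fun x y => mulDr x y z) (mul0r z)). Qed.

Lemma mul_span_sub (X : seq V) (S : {vspace V}) x w :
  {in X, forall z, mul x z \in S} -> w \in <<X>> -> mul x w \in S.
Proof.
move=> XS /(coord_span (X := in_tuple X)) ->.
rewrite mul_sumr; apply: rpred_sum => i _; rewrite mulZr; apply: rpredZ.
by apply: XS; apply: mem_nth.
Qed.

Lemma mem_prodsp (U W : {vspace V}) x y :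
  x \in U -> y \in W -> mul x y \in prodsp mul U W.
Proof.
move=> /coord_vbasis -> /coord_vbasis ->.
rewrite mul_suml; apply: rpred_sum => i _; rewrite mulZl; apply: rpredZ.
rewrite mul_sumr; apply: rpred_sum => j _; rewrite mulZr; apply: rpredZ.
by apply/memv_span/allpairs_f; apply: mem_nth; rewrite size_tuple.
Qed.

Lemma prodsp_sub (U W S : {vspace V}) :
  (forall x y, x \in U -> y \in W -> mul x y \in S) -> prodsp mul U W <= S.
Proof.
move=> US; apply/span_subvP => _ /allpairsP [[x y] [Ux Wy ->]].
by apply: US; apply: vbasis_mem.
Qed.

Lemma lpow_eq0_le {U : {vspace V}} {m n} :
  (m <= n)%N -> lpow mul U m = 0 -> lpow mul U n = 0.
Proof.
move=> /subnKC <- Um0; elim: (n - m)%N => [|k IH]; first by rewrite addn0.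
rewrite addnS /= IH; apply/eqP; rewrite -subv0; apply: prodsp_sub => x y _.
by rewrite memv0 => /eqP ->; rewrite mul0r mem0v.
Qed.

Lemma sup_square_subalg (M : {vspace V}) :
  prodsp mul fullv fullv <= M -> is_subalg mul M.
Proof. by move=> /subvP sqM x y _ _; apply/sqM/mem_prodsp; rewrite memvf. Qed.

Hypothesis mul_leibniz : left_leibniz mul.

(* Leibniz: if left multiplication by x stabilises U, it stabilises every
   power of U, since x (u w) = (x u) w + u (x w). *)
Lemma lpow_mul_stable {U : {vspace V}} {x s} :
  {in U, forall u, mul x u \in U} ->
  {in lpow mul U s, forall w, mul x w \in lpow mul U s}.
Proof.
move=> xU; elim: s => [|s IH] //= w; apply: mul_span_sub.
move=> _ /allpairsP [[u w'] [Uu Uw' ->]] /=.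
have {}Uu := vbasis_mem Uu; have {}Uw' := vbasis_mem Uw'.
by rewrite mul_leibniz rpredD // mem_prodsp // ?xU ?IH.
Qed.

Section TwoIdeals.
Variables M1 M2 : {vspace V}.
Hypotheses (sqM1 : prodsp mul fullv fullv <= M1)
           (sqM2 : prodsp mul fullv fullv <= M2)
           (M12 : M1 + M2 = fullv).

Let mul_in_M1 x u : mul x u \in M1.
Proof. by apply: (subvP sqM1); apply: mem_prodsp; rewrite memvf. Qed.

Let mul_in_M2 x u : mul x u \in M2.
Proof. by apply: (subvP sqM2); apply: mem_prodsp; rewrite memvf. Qed.

(* Mixed powers: the sum over s <= k of M1^(s+1) :&: M2^(k-s+1), recalling
   that lpow mul M s is M^(s+1). *)
Definition mixed_pow (k : nat) : {vspace V} :=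
  (\sum_(s < k.+1) (lpow mul M1 s :&: lpow mul M2 (k - s)))%VS.

Lemma mixed_pow_sup {k s} :
  (s <= k)%N -> lpow mul M1 s :&: lpow mul M2 (k - s) <= mixed_pow k.
Proof.
by move=> sk; apply: (sumv_sup (inord s)) => //; rewrite inordK ?ltnS.
Qed.

(* Multiplying a mixed power on the left raises its degree: write x = u1 + u2
   with ui in Mi; u1 raises the M1-exponent and u2 the M2-exponent, while each
   factor stabilises the other power by lpow_mul_stable. *)
Lemma mul_mixed_pow x k y : y \in mixed_pow k -> mul x y \in mixed_pow k.+1.
Proof.
have /memv_addP [u1 M1u1 [u2 M2u2 ->]] : x \in (M1 + M2)%VS by rewrite M12 memvf.
move=> /memv_sumP [ys Hys ->]; rewrite mulDl !mul_sumr.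
apply: rpredD; apply: rpred_sum => [[s /= ltsk]] _;
  have /memv_capP [ys1 ys2] := Hys (Ordinal ltsk) isT.
- apply: (subvP (mixed_pow_sup ltsk)); rewrite subSS memv_cap mem_prodsp //=.
  exact: (lpow_mul_stable (fun u _ => mul_in_M2 u1 u) ys2).
- apply: (subvP (mixed_pow_sup (ltnW ltsk))); rewrite memv_cap.
  rewrite (lpow_mul_stable (fun u _ => mul_in_M1 u2 u) ys1) /=.
  by rewrite subSn // mem_prodsp.
Qed.

Lemma lpow_full_mixed k : lpow mul fullv k.+1 <= mixed_pow k.
Proof.
elim: k => [|k IH].
  apply: (subv_trans _ (mixed_pow_sup (leqnn 0))); rewrite subnn.
  by apply: prodsp_sub => x y _ _; rewrite memv_cap mul_in_M1 mul_in_M2.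
apply: prodsp_sub => x y _ /(subvP IH); exact: mul_mixed_pow.
Qed.

Lemma nilpotent_sum_ideals :
  nilpotent_sp mul M1 -> nilpotent_sp mul M2 -> nilpotent_sp mul fullv.
Proof.
move=> [a M1a] [b M2b]; exists (a + b).+1; apply/eqP; rewrite -subv0.
apply: subv_trans (lpow_full_mixed _) _; apply/subv_sumP => s _.
have [as_le | sa_lt] := leqP a s.
  by apply: subv_trans (capvSl _ _) _; rewrite (lpow_eq0_le as_le M1a).
apply: subv_trans (capvSr _ _) _.
by rewrite (lpow_eq0_le _ M2b) //; lia.
Qed.

End TwoIdeals.
End Bilinear.

(* A subspace P of codimension at least 2 lies in two proper subspaces whose
   sum is the whole space: take M1 = P + <[v]> for some v outside P, and
   M2 = P + M1^C. *)
Lemma codim2_cover (F : fieldType) (V : vectType F) (P : {vspace V}) :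
  (1 < \dim (fullv : {vspace V}) - \dim P)%N ->
  exists M1 M2 : {vspace V},
    [/\ P <= M1, P <= M2, M1 != fullv, M2 != fullv & M1 + M2 = fullv].
Proof.
move=> codimP.
have /subvPn [v _ vP] : ~~ (fullv <= P).
  by apply: contraTN codimP => /dimvS fP; rewrite -leqNgt; lia.
pose M1 := (P + <[v]>)%VS; pose M2 := (P + M1^C)%VS.
have ltPM1 : (\dim P < \dim M1)%N.
  rewrite (ltn_leqif (dimv_leqif_sup (addvSl _ _))).
  by apply: contra vP => /subvP; apply; apply/(subvP (addvSr _ _))/memv_line.
have dimM1 : (\dim M1 <= \dim P + 1)%N.
  by rewrite (leq_trans (dimv_add_leqif P <[v]>).1) // leq_add2l dim_vline leq_b1.
have dimM2 : (\dim M2 <= \dim P + \dim M1^C)%N := (dimv_add_leqif P M1^C).1.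
rewrite dimv_compl in dimM2.
exists M1, M2; split; rewrite ?addvSl //.
- by apply: contraTneq codimP => M1f; rewrite -M1f; lia.
- by apply/negP => /eqP M2f; move: dimM2; rewrite M2f; lia.
- apply/eqP; rewrite eqEsubv subvf /= -(addv_complf M1).
  by rewrite addvS ?addvSr.
Qed.

Theorem mainTheorem6 (F : fieldType) (V : vectType F) (mul : V -> V -> V)
  (Hbil : bilinear_mul mul) (Hleib : left_leibniz mul)
  (Hnotnil : ~ nilpotent_sp mul fullv)
  (Hmin : forall U : {vspace V}, is_subalg mul U -> U != fullv -> nilpotent_sp mul U) :
  (\dim (fullv : {vspace V}) - \dim (prodsp mul fullv fullv) <= 1)%N.
Proof.
rewrite leqNgt; apply/negP => /codim2_cover [M1 [M2 [sqM1 sqM2 M1f M2f M12]]].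
apply: Hnotnil; apply: (nilpotent_sum_ideals Hbil Hleib sqM1 sqM2 M12).
- exact: Hmin (sup_square_subalg Hbil sqM1) M1f.
- exact: Hmin (sup_square_subalg Hbil sqM2) M2f.
Qed.
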